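(* Let $U\subset\mathbb{R}^n$ be a bounded, open, connected set and let $(u_1,u_2)$ be a viscosity supersolution of the system (S) in $U$. Assume that $\min_{i=1,2}\inf_{U}u_i$ is attained at a point of $U$, i.e. there exist $i_0\in\{1,2\}$ and $x^*\in U$ with $u_{i_0}(x^* )\le u_i(x)$ for all $x\in U$, $i=1,2$. Then there is a constant $C$ such that $u_1\equiv u_2\equiv C$ in $U$.
   Context: For $\varphi\in C^2$ near $x$, set $\Delta_\infty\varphi(x)=|D\varphi(x)|^{-2}\sum_{k,l=1}^n\varphi_{x_k}\varphi_{x_l}\varphi_{x_kx_l}(x)$ when $D\varphi(x)\neq0$. Define $\Delta_\infty^+\varphi(x)=\Delta_\infty\varphi(x)$ if $D\varphi(x)\ne0$ and $\Delta_\infty^+\varphi(x)=\max\{D^2\varphi(x)v\cdot v: v\in\mathbb{S}^{n-1}\}$ if $D\varphi(x)=0$; define $\Delta_\infty^-\varphi(x)$ in the same way with $\min$ in place of $\max$. The system (S) on an open set $\Omega$ is: $-\Delta_\infty u_1+u_1-u_2=0$ and $-\Delta_\infty u_2+u_2-u_1=0$ in $\Omega$. A pair $(u_1,u_2)$ of upper semicontinuous functions on $\Omega$ is a viscosity subsolution of (S) in $\Omega$ if for each $i\in\{1,2\}$, $j=3-i$, and each $\varphi\in C^2(\Omega)$ such that $u_i-\varphi$ has a local maximum at $x_0\in\Omega$, one has $-\Delta_\infty^+\varphi(x_0)+u_i(x_0)-u_j(x_0)\le0$. A pair of lower semicontinuous functions on $\Omega$ is a viscosity supersolution if for each $i$,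 $j=3-i$, and each $\varphi\in C^2(\Omega)$ such that $u_i-\varphi$ has a local minimum at $x_0\in\Omega$, one has $-\Delta_\infty^-\varphi(x_0)+u_i(x_0)-u_j(x_0)\ge0$. A viscosity solution is a pair that is both a subsolution and a supersolution. *)

From Stdlib Require Import Reals Lra.
Open Scope R_scope.

(* Points of R^n are represented as functions nat -> R whose coordinates
   of index >= n vanish (predicate [inRn n]). *)
Definition pt := nat -> R.

Definition inRn (n : nat) (x : pt) : Prop := forall k, (n <= k)%nat -> x k = 0.

Fixpoint sumR (n : nat) (f : nat -> R) : R :=
  match n with
  | O => 0
  | S m => sumR m f + f m
  end.

Definition dot (n : nat) (x y : pt) : R := sumR n (fun k => x k * y k).
Definition dist (n : nat) (x y : pt) : R := sqrt (sumR n (fun k => (x k - y k) ^ 2)).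
Definition zero_pt : pt := fun _ => 0.

Definition is_open (n : nat) (U : pt -> Prop) : Prop :=
  (forall x, U x -> inRn n x) /\
  forall x, U x -> exists r, 0 < r /\ forall y, inRn n y -> dist n y x < r -> U y.

Definition bounded_set (n : nat) (U : pt -> Prop) : Prop :=
  exists M, forall x, U x -> dist n x zero_pt <= M.

Definition open_in (n : nat) (U A : pt -> Prop) : Prop :=
  (forall x, A x -> U x) /\
  forall x, A x -> exists r, 0 < r /\ forall y, U y -> dist n y x < r -> A y.

Definition connected (n : nat) (U : pt -> Prop) : Prop :=
  ~ exists A B : pt -> Prop,
      open_in n U A /\ open_in n U B /\
      (forall x, ~ (A x /\ B x)) /\
      (forall x, U x -> A x \/ B x) /\
      (exists a, A a) /\ (exists b, B b).

Definition lsc_on (n : nat) (O : pt -> Prop) (u : pt -> R) : Prop :=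
  forall x, O x -> forall eps, 0 < eps ->
    exists d, 0 < d /\ forall y, O y -> dist n y x < d -> u x - eps < u y.

Definition has_gradient_on (n : nat) (O : pt -> Prop) (f : pt -> R) (Dfun : pt -> pt) : Prop :=
  forall x, O x -> forall eps, 0 < eps ->
    exists d, 0 < d /\ forall y, inRn n y -> dist n y x < d ->
      Rabs (f y - f x - dot n (Dfun x) (fun k => y k - x k)) <= eps * dist n y x.

Definition cont_on (n : nat) (O : pt -> Prop) (f : pt -> R) : Prop :=
  forall x, O x -> forall eps, 0 < eps ->
    exists d, 0 < d /\ forall y, O y -> dist n y x < d -> Rabs (f y - f x) < eps.

(* phi is C^2 on O, with gradient Dphi and Hessian D2phi (D2phi x k l = d_l d_k phi (x)). *)
Definition C2_on (n : nat) (O : pt -> Prop) (phi : pt -> R)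
    (Dphi : pt -> pt) (D2phi : pt -> nat -> nat -> R) : Prop :=
  has_gradient_on n O phi Dphi /\
  (forall k, (k < n)%nat -> has_gradient_on n O (fun x => Dphi x k) (fun x => D2phi x k)) /\
  (forall k l, (k < n)%nat -> (l < n)%nat -> cont_on n O (fun x => D2phi x k l)).

Definition quad (n : nat) (H : nat -> nat -> R) (v : pt) : R :=
  sumR n (fun k => sumR n (fun l => v k * v l * H k l)).

Definition unit_vec (n : nat) (v : pt) : Prop := inRn n v /\ dot n v v = 1.

(* [inf_lap_minus n p H m] : m = Delta_infty^- phi(x) where p = Dphi(x), H = D2phi(x). *)
Definition inf_lap_minus (n : nat) (p : pt) (H : nat -> nat -> R) (m : R) : Prop :=
  (dot n p p <> 0 /\
     m = / (dot n p p) * sumR n (fun k => sumR n (fun l => p k * p l * H k l))) \/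
  (dot n p p = 0 /\
     (exists v, unit_vec n v /\ quad n H v = m) /\
     (forall v, unit_vec n v -> m <= quad n H v)).

Definition local_min_on (n : nat) (O : pt -> Prop) (f : pt -> R) (x0 : pt) : Prop :=
  exists r, 0 < r /\ forall y, O y -> dist n y x0 < r -> f x0 <= f y.

Definition super_component (n : nat) (O : pt -> Prop) (ui uj : pt -> R) : Prop :=
  forall phi Dphi D2phi, C2_on n O phi Dphi D2phi ->
  forall x0, O x0 -> local_min_on n O (fun x => ui x - phi x) x0 ->
  forall m, inf_lap_minus n (Dphi x0) (D2phi x0) m ->
    - m + ui x0 - uj x0 >= 0.

Definition visc_supersolution (n : nat) (O : pt -> Prop) (u1 u2 : pt -> R) : Prop :=
  lsc_on n O u1 /\ lsc_on n O u2 /\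
  super_component n O u1 u2 /\ super_component n O u2 u1.

(* Let [m] be the minimum and [w = min(u1, u2)]. Testing a component at a point where it
   equals [m] with the test function [0] shows that the other component is [<= m] there,
   so [{w = m}] is the set where [u1 = u2 = m]. This set is closed in [U] since [w] is lower
   semicontinuous, and open by a Hopf-type argument: [w] is itself a supersolution of
   [- Delta_infty w >= 0], and if [w > m] near some [y] close to a point of [{w = m}], the
   barrier [a (c - |x - y|^2)^N] can be slid under [w] so that it touches [w] from below at a
   point where its infinity-Laplacian is positive. Connectedness of [U] concludes. *)

From Stdlib Require Import Reals Lra Lia Psatz IndefiniteDescription Classical.
Open Scope R_scope.

(** * Finite sums and Euclidean geometry *)

Lemma sumR_ext n f g : (forall k, (k < n)%nat -> f k = g k) -> sumR n f = sumR n g.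
Proof.
  induction n as [|n IH]; intros Hfg; simpl; [reflexivity|].
  rewrite (Hfg n ltac:(lia)), IH; [reflexivity|]. intros k Hk. apply Hfg. lia.
Qed.

Lemma sumR_add n f g : sumR n (fun k => f k + g k) = sumR n f + sumR n g.
Proof. induction n as [|n IH]; simpl; [ring|]. rewrite IH; ring. Qed.

Lemma sumR_scal n a f : sumR n (fun k => a * f k) = a * sumR n f.
Proof. induction n as [|n IH]; simpl; [ring|]. rewrite IH; ring. Qed.

Lemma sumR_const n r : sumR n (fun _ => r) = INR n * r.
Proof. induction n as [|n IH]; simpl sumR; [simpl; ring|]. rewrite IH, S_INR. ring. Qed.

Lemma sumR_0 n : sumR n (fun _ => 0) = 0.
Proof. rewrite sumR_const. ring. Qed.

Lemma sumR_le n f g : (forall k, (k < n)%nat -> f k <= g k) -> sumR n f <= sumR n g.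
Proof.
  induction n as [|n IH]; intros Hfg; simpl; [lra|].
  pose proof (Hfg n ltac:(lia)). pose proof (IH ltac:(intros; apply Hfg; lia)). lra.
Qed.

Lemma sumR_nonneg n f : (forall k, (k < n)%nat -> 0 <= f k) -> 0 <= sumR n f.
Proof. intros Hf. rewrite <- (sumR_0 n). apply (sumR_le n (fun _ => 0)). exact Hf. Qed.

Lemma sumR_ge_term n f k :
  (forall j, (j < n)%nat -> 0 <= f j) -> (k < n)%nat -> f k <= sumR n f.
Proof.
  induction n as [|n IH]; intros Hf Hk; simpl; [lia|].
  pose proof (Hf n ltac:(lia)). pose proof (sumR_nonneg n f ltac:(intros; apply Hf; lia)).
  destruct (Nat.eq_dec k n) as [->|Hne]; [lra|].
  pose proof (IH ltac:(intros; apply Hf; lia) ltac:(lia)). lra.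
Qed.

Definition kdelta (k l : nat) : R := if Nat.eq_dec k l then 1 else 0.

Lemma sumR_mul_kdelta n f k : (k < n)%nat -> sumR n (fun l => f l * kdelta k l) = f k.
Proof.
  induction n as [|n IH]; intros Hk; simpl; [lia|]. unfold kdelta at 2.
  destruct (Nat.eq_dec k n) as [->|Hne]; [|rewrite IH by lia; ring].
  rewrite (sumR_ext n _ (fun _ => 0)), sumR_0; [ring|].
  intros l Hl. unfold kdelta. destruct (Nat.eq_dec n l); [lia|ring].
Qed.

Lemma sumR_kdelta_mul n f k : (k < n)%nat -> sumR n (fun l => kdelta k l * f l) = f k.
Proof.
  intros Hk. rewrite <- (sumR_mul_kdelta n f k Hk). apply sumR_ext. intros; cbv beta; ring.
Qed.

Definition norm (n : nat) (a : pt) : R := sqrt (dot n a a).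

Lemma dot_ext_l n a b v : (forall k, (k < n)%nat -> a k = b k) -> dot n a v = dot n b v.
Proof. intros Hab. apply sumR_ext. intros k Hk. rewrite Hab; auto. Qed.

Lemma dot_add_l n a b v : dot n (fun k => a k + b k) v = dot n a v + dot n b v.
Proof. unfold dot. rewrite <- sumR_add. apply sumR_ext. intros; cbv beta; ring. Qed.

Lemma dot_scal_l n c a v : dot n (fun k => c * a k) v = c * dot n a v.
Proof. unfold dot. rewrite <- sumR_scal. apply sumR_ext. intros; cbv beta; ring. Qed.

Lemma dot_0_l n v : dot n (fun _ => 0) v = 0.
Proof. unfold dot. rewrite (sumR_ext n _ (fun _ => 0)) by (intros; cbv beta; ring). apply sumR_0. Qed.

Lemma dot_kdelta_l n k v : (k < n)%nat -> dot n (kdelta k) v = v k.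
Proof. apply sumR_kdelta_mul. Qed.

Lemma dot_self_nonneg n a : 0 <= dot n a a.
Proof. apply sumR_nonneg. intros. nra. Qed.

Lemma dot_self_eq0 n a : dot n a a = 0 -> forall k, (k < n)%nat -> a k = 0.
Proof.
  intros H0 k Hk.
  pose proof (sumR_ge_term n (fun j => a j * a j) k ltac:(intros; nra) Hk).
  unfold dot in H0. nra.
Qed.

Lemma dot_self_add n a b :
  dot n (fun k => a k + b k) (fun k => a k + b k) = dot n a a + 2 * dot n a b + dot n b b.
Proof. unfold dot. induction n as [|n IH]; simpl; [ring|]. rewrite IH. ring. Qed.

Lemma dot_self_affine n a b t :
  dot n (fun k => t * a k + b k) (fun k => t * a k + b k) =
  t * t * dot n a a + 2 * t * dot n a b + dot n b b.
Proof. unfold dot. induction n as [|n IH]; simpl; [ring|]. rewrite IH. ring. Qed.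

Lemma Cauchy_Schwarz_sqr n a b : dot n a b * dot n a b <= dot n a a * dot n b b.
Proof.
  pose proof (dot_self_nonneg n b).
  destruct (Req_dec (dot n a a) 0) as [Ha0|Ha0].
  { assert (Hab : dot n a b = 0).
    { unfold dot. rewrite (sumR_ext n _ (fun _ => 0)); [apply sumR_0|].
      intros k Hk. rewrite (dot_self_eq0 n a Ha0 k Hk). ring. }
    rewrite Hab, Ha0. lra. }
  assert (Ha : 0 < dot n a a) by (pose proof (dot_self_nonneg n a); lra).
  (* the quadratic [t |-> |t a + b|^2] is nonnegative at its vertex *)
  pose proof (dot_self_nonneg n (fun k => (- dot n a b / dot n a a) * a k + b k)) as Hq.
  rewrite dot_self_affine in Hq.
  replace (- dot n a b / dot n a a * (- dot n a b / dot n a a) * dot n a a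
           + 2 * (- dot n a b / dot n a a) * dot n a b + dot n b b)
    with ((dot n a a * dot n b b - dot n a b * dot n a b) / dot n a a) in Hq
    by (field; lra).
  apply Rmult_le_compat_r with (r := dot n a a) in Hq; [|lra].
  unfold Rdiv in Hq. rewrite Rmult_0_l, Rmult_assoc, Rinv_l, Rmult_1_r in Hq by lra. lra.
Qed.

Lemma Cauchy_Schwarz n a b : Rabs (dot n a b) <= norm n a * norm n b.
Proof.
  unfold norm. rewrite <- sqrt_mult by apply dot_self_nonneg.
  rewrite <- sqrt_Rsqr_abs. apply sqrt_le_1_alt. apply Cauchy_Schwarz_sqr.
Qed.

Lemma norm_nonneg n a : 0 <= norm n a.
Proof. apply sqrt_pos. Qed.

Lemma norm_triangle n a b : norm n (fun k => a k + b k) <= norm n a + norm n b.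
Proof.
  pose proof (norm_nonneg n a). pose proof (norm_nonneg n b).
  apply Rsqr_incr_0_var; [|lra]. unfold Rsqr, norm.
  rewrite sqrt_sqrt by apply dot_self_nonneg.
  rewrite dot_self_add.
  pose proof (Cauchy_Schwarz n a b). pose proof (Rle_abs (dot n a b)).
  pose proof (sqrt_sqrt _ (dot_self_nonneg n a)). pose proof (sqrt_sqrt _ (dot_self_nonneg n b)).
  unfold norm in *. nra.
Qed.

Definition sqdist (n : nat) (x y : pt) : R := sumR n (fun k => (x k - y k) ^ 2).

Lemma dist_sqrt_sqdist n x y : dist n x y = sqrt (sqdist n x y).
Proof. reflexivity. Qed.

Lemma sqdist_nonneg n x y : 0 <= sqdist n x y.
Proof. apply sumR_nonneg. intros. apply pow2_ge_0. Qed.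

Lemma sqdist_dist n x y : sqdist n x y = dist n x y * dist n x y.
Proof. rewrite dist_sqrt_sqdist, sqrt_sqrt; [reflexivity | apply sqdist_nonneg]. Qed.

Lemma dist_nonneg n x y : 0 <= dist n x y.
Proof. apply sqrt_pos. Qed.

Lemma dist_sym n x y : dist n x y = dist n y x.
Proof. unfold dist. f_equal. apply sumR_ext. intros; cbv beta; ring. Qed.

Lemma dist_norm n x y : dist n x y = norm n (fun k => x k - y k).
Proof. unfold dist, norm, dot. f_equal. apply sumR_ext. intros; cbv beta; ring. Qed.

Lemma dist_triangle n x y z : dist n x z <= dist n x y + dist n y z.
Proof.
  rewrite !dist_norm.
  replace (norm n (fun k => x k - z k)) with (norm n (fun k => (x k - y k) + (y k - z k)))
    by (unfold norm, dot; f_equal; apply sumR_ext; intros; cbv beta; ring).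
  apply norm_triangle.
Qed.

Lemma Rabs_coord_le_dist n x y k : (k < n)%nat -> Rabs (x k - y k) <= dist n x y.
Proof.
  intros Hk. rewrite <- sqrt_Rsqr_abs. apply sqrt_le_1_alt. unfold Rsqr.
  replace ((x k - y k) * (x k - y k)) with ((x k - y k) ^ 2) by ring.
  apply (sumR_ge_term n (fun j => (x j - y j) ^ 2)); [intros; apply pow2_ge_0 | exact Hk].
Qed.

Lemma dot_le_norm_dist n a x y : Rabs (dot n a (fun k => x k - y k)) <= norm n a * dist n x y.
Proof. rewrite dist_norm. apply Cauchy_Schwarz. Qed.

(** * Gradients *)

Definition has_grad_at (n : nat) (f : pt -> R) (D : pt) (x : pt) : Prop :=
  forall eps, 0 < eps -> exists d, 0 < d /\ forall y, inRn n y -> dist n y x < d ->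
    Rabs (f y - f x - dot n D (fun k => y k - x k)) <= eps * dist n y x.

Lemma Rabs_mul_small c r e d :
  0 <= e -> 0 <= d -> Rabs r <= e / (Rabs c + 1) * d -> Rabs (c * r) <= e * d.
Proof.
  intros He Hd Hr. pose proof (Rabs_pos c). rewrite Rabs_mult.
  apply Rle_trans with (Rabs c * (e / (Rabs c + 1) * d)); [apply Rmult_le_compat_l; lra|].
  replace (Rabs c * (e / (Rabs c + 1) * d)) with (Rabs c / (Rabs c + 1) * (e * d)) by (field; lra).
  assert (Rabs c / (Rabs c + 1) <= 1).
  { apply Rmult_le_reg_r with (Rabs c + 1); [lra|]. field_simplify; lra. }
  assert (0 <= Rabs c / (Rabs c + 1)) by (apply Rle_mult_inv_pos; lra).
  pose proof (Rmult_le_pos _ _ He Hd). nra.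
Qed.

Section Gradients.
Variable n : nat.

Lemma has_grad_at_ext f D D' x :
  (forall k, (k < n)%nat -> D k = D' k) -> has_grad_at n f D x -> has_grad_at n f D' x.
Proof.
  intros HD Hf eps He. destruct (Hf eps He) as [d [Hd Hy]]. exists d; split; [exact Hd|].
  intros y Hy1 Hy2. rewrite <- (dot_ext_l n D D'); auto.
Qed.

Lemma has_grad_at_const c x : has_grad_at n (fun _ => c) (fun _ => 0) x.
Proof.
  intros eps He. exists 1; split; [lra|]. intros y _ _.
  rewrite dot_0_l, Rminus_diag, Rminus_0_r, Rabs_R0.
  pose proof (dist_nonneg n y x). nra.
Qed.

Lemma has_grad_at_coord_sub k a x :
  (k < n)%nat -> has_grad_at n (fun z => z k - a) (kdelta k) x.
Proof.
  intros Hk eps He. exists 1; split; [lra|]. intros y _ _. rewrite dot_kdelta_l by exact Hk.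
  replace (y k - a - (x k - a) - (y k - x k)) with 0 by ring. rewrite Rabs_R0.
  pose proof (dist_nonneg n y x). nra.
Qed.

Lemma has_grad_at_sqdist c x : has_grad_at n (fun z => sqdist n z c) (fun k => 2 * (x k - c k)) x.
Proof.
  intros eps He. exists eps; split; [exact He|]. intros y _ Hd.
  assert (E : sqdist n y c - sqdist n x c - dot n (fun k => 2 * (x k - c k)) (fun k => y k - x k)
              = dist n y x * dist n y x).
  { rewrite <- sqdist_dist. unfold sqdist, dot. clear.
    induction n as [|m IH]; cbn [sumR]; [ring|]. rewrite <- IH. ring. }
  rewrite E. pose proof (dist_nonneg n y x). rewrite Rabs_right by nra. nra.
Qed.

Lemma has_grad_at_lipschitz f D x : has_grad_at n f D x ->
  exists d, 0 < d /\ forall y, inRn n y -> dist n y x < d ->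
    Rabs (f y - f x) <= (norm n D + 1) * dist n y x.
Proof.
  intros Hf. destruct (Hf 1 ltac:(lra)) as [d [Hd Hy]]. exists d; split; [exact Hd|].
  intros y Hy1 Hy2. specialize (Hy y Hy1 Hy2).
  pose proof (dot_le_norm_dist n D y x).
  pose proof (Rabs_triang (f y - f x - dot n D (fun k => y k - x k)) (dot n D (fun k => y k - x k))).
  replace (f y - f x - dot n D (fun k => y k - x k) + dot n D (fun k => y k - x k))
    with (f y - f x) in * by ring.
  lra.
Qed.

Lemma has_grad_at_cont f D x : has_grad_at n f D x -> forall e, 0 < e ->
  exists d, 0 < d /\ forall y, inRn n y -> dist n y x < d -> Rabs (f y - f x) < e.
Proof.
  intros Hf e He. destruct (has_grad_at_lipschitz f D x Hf) as [d [Hd Hy]].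
  set (L := norm n D + 1). assert (HL : 1 <= L) by (pose proof (norm_nonneg n D); unfold L; lra).
  exists (Rmin d (e / L)). split; [apply Rmin_pos; [exact Hd | apply Rdiv_lt_0_compat; lra]|].
  intros y Hy1 Hy2. pose proof (Rmin_l d (e / L)). pose proof (Rmin_r d (e / L)).
  specialize (Hy y Hy1 ltac:(lra)). fold L in Hy.
  assert (Hsmall : L * dist n y x < L * (e / L)) by (apply Rmult_lt_compat_l; lra).
  replace (L * (e / L)) with e in Hsmall by (field; lra). lra.
Qed.

Lemma has_grad_at_add f g Df Dg x : has_grad_at n f Df x -> has_grad_at n g Dg x ->
  has_grad_at n (fun z => f z + g z) (fun k => Df k + Dg k) x.
Proof.
  intros Hf Hg eps He.
  destruct (Hf (eps / 2) ltac:(lra)) as [d1 [Hd1 H1]].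
  destruct (Hg (eps / 2) ltac:(lra)) as [d2 [Hd2 H2]].
  exists (Rmin d1 d2); split; [apply Rmin_pos; assumption|].
  intros y Hy Hdy. pose proof (Rmin_l d1 d2). pose proof (Rmin_r d1 d2).
  specialize (H1 y Hy ltac:(lra)). specialize (H2 y Hy ltac:(lra)).
  rewrite dot_add_l.
  replace (f y + g y - (f x + g x) - (dot n Df (fun k => y k - x k) + dot n Dg (fun k => y k - x k)))
    with ((f y - f x - dot n Df (fun k => y k - x k)) + (g y - g x - dot n Dg (fun k => y k - x k)))
    by ring.
  eapply Rle_trans; [apply Rabs_triang | lra].
Qed.

Lemma has_grad_at_mul f g Df Dg x : has_grad_at n f Df x -> has_grad_at n g Dg x ->
  has_grad_at n (fun z => f z * g z) (fun k => f x * Dg k + g x * Df k) x.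
Proof.
  intros Hf Hg eps He.
  set (L := norm n Dg + 1). assert (HL : 1 <= L) by (pose proof (norm_nonneg n Dg); unfold L; lra).
  destruct (Hf (eps / 3 / (Rabs (g x) + 1))) as [d1 [Hd1 H1]].
  { pose proof (Rabs_pos (g x)). apply Rdiv_lt_0_compat; lra. }
  destruct (Hg (eps / 3 / (Rabs (f x) + 1))) as [d2 [Hd2 H2]].
  { pose proof (Rabs_pos (f x)). apply Rdiv_lt_0_compat; lra. }
  destruct (has_grad_at_lipschitz g Dg x Hg) as [d3 [Hd3 H3]].
  destruct (has_grad_at_cont f Df x Hf (eps / 3 / L)) as [d4 [Hd4 H4]].
  { apply Rdiv_lt_0_compat; lra. }
  exists (Rmin (Rmin d1 d2) (Rmin d3 d4)). split; [repeat apply Rmin_pos; assumption|].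
  intros y Hy Hdy.
  pose proof (Rmin_l (Rmin d1 d2) (Rmin d3 d4)). pose proof (Rmin_r (Rmin d1 d2) (Rmin d3 d4)).
  pose proof (Rmin_l d1 d2). pose proof (Rmin_r d1 d2).
  pose proof (Rmin_l d3 d4). pose proof (Rmin_r d3 d4).
  specialize (H1 y Hy ltac:(lra)). specialize (H2 y Hy ltac:(lra)).
  specialize (H3 y Hy ltac:(lra)). specialize (H4 y Hy ltac:(lra)). fold L in H3.
  set (v := fun k => y k - x k) in *. set (d := dist n y x) in *.
  assert (Hd0 : 0 <= d) by apply dist_nonneg.
  rewrite dot_add_l, !dot_scal_l.
  replace (f y * g y - f x * g x - (f x * dot n Dg v + g x * dot n Df v))
    with (f x * (g y - g x - dot n Dg v) + g x * (f y - f x - dot n Df v)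
          + (f y - f x) * (g y - g x)) by ring.
  assert (E1 := Rabs_mul_small (f x) _ (eps / 3) d ltac:(lra) Hd0 H2).
  assert (E2 := Rabs_mul_small (g x) _ (eps / 3) d ltac:(lra) Hd0 H1).
  assert (E3 : Rabs ((f y - f x) * (g y - g x)) <= eps / 3 * d).
  { rewrite Rabs_mult. apply Rle_trans with (eps / 3 / L * (L * d)).
    - apply Rmult_le_compat; try apply Rabs_pos; lra.
    - right. field. lra. }
  pose proof (Rabs_triang (f x * (g y - g x - dot n Dg v) + g x * (f y - f x - dot n Df v))
                          ((f y - f x) * (g y - g x))).
  pose proof (Rabs_triang (f x * (g y - g x - dot n Dg v)) (g x * (f y - f x - dot n Df v))).
  lra.
Qed.

Lemma derivable_pt_lim_remainder g s l : derivable_pt_lim g s l -> forall eps, 0 < eps ->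
  exists del, 0 < del /\ forall h, Rabs h < del -> Rabs (g (s + h) - g s - l * h) <= eps * Rabs h.
Proof.
  intros Hg eps He. destruct (Hg eps He) as [del Hdel]. exists del; split; [apply cond_pos|].
  intros h Hh. destruct (Req_dec h 0) as [->|Hn].
  - rewrite Rplus_0_r, Rmult_0_r, Rminus_diag, Rminus_0_r, Rabs_R0. lra.
  - specialize (Hdel h Hn Hh).
    replace (g (s + h) - g s - l * h) with (((g (s + h) - g s) / h - l) * h) by (field; exact Hn).
    rewrite Rabs_mult. apply Rmult_le_compat_r; [apply Rabs_pos | lra].
Qed.

Lemma has_grad_at_comp g g' f D x : derivable_pt_lim g (f x) g' -> has_grad_at n f D x ->
  has_grad_at n (fun z => g (f z)) (fun k => g' * D k) x.
Proof.
  intros Hg Hf eps He.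
  set (L := norm n D + 1). assert (HL : 1 <= L) by (pose proof (norm_nonneg n D); unfold L; lra).
  destruct (derivable_pt_lim_remainder g (f x) g' Hg (eps / 2 / L)) as [del [Hdel H1]].
  { apply Rdiv_lt_0_compat; lra. }
  destruct (has_grad_at_lipschitz f D x Hf) as [d2 [Hd2 H2]].
  destruct (has_grad_at_cont f D x Hf del Hdel) as [d3 [Hd3 H3]].
  destruct (Hf (eps / 2 / (Rabs g' + 1))) as [d4 [Hd4 H4]].
  { pose proof (Rabs_pos g'). apply Rdiv_lt_0_compat; lra. }
  exists (Rmin (Rmin d2 d3) d4). split; [repeat apply Rmin_pos; assumption|].
  intros y Hy Hdy.
  pose proof (Rmin_l (Rmin d2 d3) d4). pose proof (Rmin_r (Rmin d2 d3) d4).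
  pose proof (Rmin_l d2 d3). pose proof (Rmin_r d2 d3).
  specialize (H2 y Hy ltac:(lra)). specialize (H3 y Hy ltac:(lra)).
  specialize (H4 y Hy ltac:(lra)). fold L in H2.
  set (v := fun k => y k - x k) in *. set (d := dist n y x) in *.
  assert (Hd0 : 0 <= d) by apply dist_nonneg.
  rewrite dot_scal_l.
  specialize (H1 (f y - f x) H3). replace (f x + (f y - f x)) with (f y) in H1 by ring.
  replace (g (f y) - g (f x) - g' * dot n D v)
    with ((g (f y) - g (f x) - g' * (f y - f x)) + g' * (f y - f x - dot n D v)) by ring.
  assert (E1 : Rabs (g (f y) - g (f x) - g' * (f y - f x)) <= eps / 2 * d).
  { eapply Rle_trans; [exact H1|]. apply Rle_trans with (eps / 2 / L * (L * d)).
    - apply Rmult_le_compat_l; [left; apply Rdiv_lt_0_compat; lra | exact H2].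
    - right. field. lra. }
  assert (E2 := Rabs_mul_small g' _ (eps / 2) d ltac:(lra) Hd0 H4).
  eapply Rle_trans; [apply Rabs_triang | lra].
Qed.

End Gradients.

Definition differentiable (n : nat) (f : pt -> R) : Prop := forall x, exists D, has_grad_at n f D x.

Section Differentiable.
Variable n : nat.

Lemma differentiable_const c : differentiable n (fun _ => c).
Proof. intros x. eexists. apply has_grad_at_const. Qed.

Lemma differentiable_coord_sub k a : (k < n)%nat -> differentiable n (fun z => z k - a).
Proof. intros Hk x. eexists. apply has_grad_at_coord_sub, Hk. Qed.

Lemma differentiable_sqdist c : differentiable n (fun z => sqdist n z c).
Proof. intros x. eexists. apply has_grad_at_sqdist. Qed.

Lemma differentiable_add f g :
  differentiable n f -> differentiable n g -> differentiable n (fun z => f z + g z).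
Proof. intros Hf Hg x. destruct (Hf x), (Hg x). eexists. apply has_grad_at_add; eassumption. Qed.

Lemma differentiable_mul f g :
  differentiable n f -> differentiable n g -> differentiable n (fun z => f z * g z).
Proof. intros Hf Hg x. destruct (Hf x), (Hg x). eexists. apply has_grad_at_mul; eassumption. Qed.

Lemma differentiable_comp g f : (forall s, exists l, derivable_pt_lim g s l) ->
  differentiable n f -> differentiable n (fun z => g (f z)).
Proof.
  intros Hg Hf x. destruct (Hf x), (Hg (f x)). eexists. apply has_grad_at_comp; eassumption.
Qed.

Lemma differentiable_cont_on O f :
  (forall x, O x -> inRn n x) -> differentiable n f -> cont_on n O f.
Proof.
  intros HO Hf x Ox eps He. destruct (Hf x) as [D HD].
  destruct (has_grad_at_cont n f D x HD eps He) as [d [Hd H]]. exists d; split; auto.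
Qed.

End Differentiable.

(** * The bump function *)

Definition powc (a c : R) (N : nat) (s : R) : R := a * (c - s) ^ N.

Lemma derivable_pt_lim_powc a c N s :
  derivable_pt_lim (powc a c N) s (powc (- (a * INR N)) c (pred N) s).
Proof.
  assert (H1 : derivable_pt_lim (fct_cte c - id)%F s (0 - 1)).
  { apply derivable_pt_lim_minus; [apply derivable_pt_lim_const | apply derivable_pt_lim_id]. }
  pose proof (derivable_pt_lim_scal _ a s _
    (derivable_pt_lim_comp _ (fun y => y ^ N) s _ _ H1 (derivable_pt_lim_pow _ N))) as H.
  replace (powc (- (a * INR N)) c (pred N) s)
    with (a * (INR N * ((fct_cte c - id)%F s) ^ pred N * (0 - 1)))
    by (unfold powc, fct_cte, minus_fct, id; ring).
  exact H.
Qed.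

Lemma derivable_powc a c N s : exists l, derivable_pt_lim (powc a c N) s l.
Proof. eexists. apply derivable_pt_lim_powc. Qed.

Section Bump.
Variables (n : nat) (y : pt) (a c : R) (M : nat).

Let a1 := - (a * INR (S (S M))).
Let a2 := - (a1 * INR (S M)).

Definition bump (x : pt) : R := powc a c (S (S M)) (sqdist n x y).

Definition bump_grad (x : pt) : pt := fun k => powc a1 c (S M) (sqdist n x y) * (2 * (x k - y k)).

Definition bump_hess (x : pt) : nat -> nat -> R := fun k l =>
  powc a1 c (S M) (sqdist n x y) * (2 * kdelta k l) +
  (2 * (x k - y k)) * (powc a2 c M (sqdist n x y) * (2 * (x l - y l))).

Lemma bump_C2 O : (forall x, O x -> inRn n x) -> C2_on n O bump bump_grad bump_hess.
Proof.
  intros HO. split; [|split].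
  - intros x _. apply (has_grad_at_comp n (powc a c (S (S M))) _ (fun z => sqdist n z y)).
    + apply derivable_pt_lim_powc.
    + apply has_grad_at_sqdist.
  - intros k Hk x _.
    apply (has_grad_at_mul n (fun z => powc a1 c (S M) (sqdist n z y)) (fun z => 2 * (z k - y k))).
    + apply (has_grad_at_comp n (powc a1 c (S M)) _ (fun z => sqdist n z y)).
      * apply derivable_pt_lim_powc.
      * apply has_grad_at_sqdist.
    + apply (has_grad_at_ext n _ (fun l => 2 * kdelta k l + (x k - y k) * 0));
        [intros; ring|].
      apply (has_grad_at_mul n (fun _ => 2) (fun z => z k - y k));
        [apply has_grad_at_const | apply has_grad_at_coord_sub, Hk].
  - intros k l Hk Hl. apply differentiable_cont_on; [exact HO|]. unfold bump_hess.
    repeat first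
      [ apply (differentiable_comp n (powc _ c _)); [apply derivable_powc | apply differentiable_sqdist]
      | apply differentiable_coord_sub; assumption
      | apply differentiable_add | apply differentiable_mul | apply differentiable_const ].
Qed.

Lemma bump_inf_lap_terms p :
  let s := sqdist n p y in
  let A := powc a1 c (S M) s in
  let B := powc a2 c M s in
  dot n (bump_grad p) (bump_grad p) = 4 * A * A * s /\
  sumR n (fun k => sumR n (fun l => bump_grad p k * bump_grad p l * bump_hess p k l))
    = 4 * A * A * s * (2 * A + 4 * B * s).
Proof.
  intros s A B. set (t := fun k => p k - y k).
  assert (Hs : s = sumR n (fun k => t k * t k)).
  { unfold s, sqdist, t. apply sumR_ext. intros; cbv beta; ring. }
  split.
  - unfold dot, bump_grad. fold s A. rewrite Hs, <- sumR_scal.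
    apply sumR_ext. intros; unfold t; cbv beta; ring.
  - unfold bump_grad, bump_hess. fold s A B.
    transitivity (sumR n (fun k => (8 * A * A * A + 16 * A * A * B * s) * (t k * t k)));
      [|rewrite sumR_scal, <- Hs; ring].
    apply sumR_ext. intros k Hk.
    transitivity (sumR n (fun l => (8 * A * A * A * t k) * (t l * kdelta k l)
                                   + (16 * A * A * B * t k * t k) * (t l * t l))).
    + apply sumR_ext. intros; unfold t; cbv beta; ring.
    + rewrite sumR_add, !sumR_scal, sumR_mul_kdelta, <- Hs by exact Hk. ring.
Qed.

(* With [s = |p - y|^2], [Delta_infty bump (p) = 2 a (M+2) (c - s)^M ((2M + 3) s - c)]. *)
Lemma bump_inf_lap_pos p :
  0 < a -> 0 < sqdist n p y < c -> c < (2 * INR M + 3) * sqdist n p y ->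
  exists m, 0 < m /\ inf_lap_minus n (bump_grad p) (bump_hess p) m.
Proof.
  intros Ha [Hs Hsc] HM. destruct (bump_inf_lap_terms p) as [E1 E2].
  set (s := sqdist n p y) in *.
  set (A := powc a1 c (S M) s) in *. set (B := powc a2 c M s) in *.
  assert (Hcs : 0 < (c - s) ^ M) by (apply pow_lt; lra).
  assert (HA : A <> 0).
  { unfold A, powc, a1. rewrite !S_INR. pose proof (pos_INR M).
    pose proof (pow_lt (c - s) (S M) ltac:(lra)). intros HA0.
    apply Rmult_integral in HA0. destruct HA0; nra. }
  exists (2 * A + 4 * B * s). split.
  - replace (2 * A + 4 * B * s) with (2 * a * (INR M + 2) * (c - s) ^ M * ((2 * INR M + 3) * s - c))
      by (unfold A, B, powc, a2, a1; rewrite !S_INR; simpl; ring).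
    pose proof (pos_INR M). apply Rmult_lt_0_compat; [|lra].
    apply Rmult_lt_0_compat; [|exact Hcs]. apply Rmult_lt_0_compat; lra.
  - left. assert (H4 : 4 * A * A * s <> 0) by (pose proof (Rsqr_pos_lt A HA); unfold Rsqr in *; nra).
    rewrite E1, E2. split; [exact H4|]. field. split; [lra | exact HA].
Qed.

Lemma bump_bounds x : 0 <= a -> sqdist n x y <= c -> 0 <= bump x <= a * c ^ S (S M).
Proof.
  intros Ha Hx. pose proof (sqdist_nonneg n x y). unfold bump, powc.
  pose proof (pow_le (c - sqdist n x y) (S (S M)) ltac:(lra)).
  pose proof (pow_incr (c - sqdist n x y) c (S (S M)) ltac:(lra)).
  split; nra.
Qed.

Lemma bump_pos x : 0 < a -> sqdist n x y < c -> 0 < bump x.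
Proof. intros Ha Hx. unfold bump, powc. pose proof (pow_lt (c - sqdist n x y) (S (S M))). nra. Qed.

Lemma bump_sphere x : sqdist n x y = c -> bump x = 0.
Proof. intros Hx. unfold bump, powc. rewrite Hx. simpl. ring. Qed.

End Bump.

(** * Sequential compactness of closed balls *)

Definition incr (psi : nat -> nat) : Prop := forall j, (psi j < psi (S j))%nat.

Lemma incr_ge psi : incr psi -> forall j, (j <= psi j)%nat.
Proof. intros H j. induction j; [lia|]. pose proof (H j). lia. Qed.

Lemma incr_lt psi : incr psi -> forall i j, (i < j)%nat -> (psi i < psi j)%nat.
Proof. intros H i j Hij. induction Hij; [apply H|]. pose proof (H m). lia. Qed.

Lemma incr_comp phi psi : incr phi -> incr psi -> incr (fun j => phi (psi j)).
Proof. intros H1 H2 j. apply incr_lt; auto. Qed.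

Lemma Un_cv_subseq u l psi : Un_cv u l -> incr psi -> Un_cv (fun j => u (psi j)) l.
Proof.
  intros H Hp eps He. destruct (H eps He) as [N HN]. exists N. intros j Hj.
  apply HN. pose proof (incr_ge psi Hp j). lia.
Qed.

Lemma inv_INR_S_lt eps : 0 < eps -> exists N, forall j, (N <= j)%nat -> / INR (S j) < eps.
Proof.
  intros He. destruct (INR_archimed eps 1 He) as [N HN]. exists N. intros j Hj.
  assert (INR N <= INR j) by (apply le_INR; exact Hj). rewrite S_INR.
  assert (0 < INR N) by (destruct N; simpl in HN; [lra | pose proof (pos_INR N); rewrite S_INR; lra]).
  apply Rmult_lt_reg_r with (INR j + 1); [lra|]. rewrite Rinv_l by lra. nra.
Qed.

(* Stdlib's Bolzano-Weierstrass only provides a cluster point [l]; the subsequence picks,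
   beyond the previous index, a term within [1/(j+1)] of [l]. *)
Lemma bounded_cv_subseq (u : nat -> R) B : (forall j, Rabs (u j) <= B) ->
  exists psi l, incr psi /\ Un_cv (fun j => u (psi j)) l.
Proof.
  intros Hb.
  destruct (Bolzano_Weierstrass u (fun r => - B <= r <= B) (compact_P3 (- B) B)) as [l Hl].
  { intros j. specialize (Hb j). pose proof (Rle_abs (u j)). pose proof (Rle_abs (- u j)).
    rewrite Rabs_Ropp in *. lra. }
  assert (Hc : forall N j, exists p, (N <= p)%nat /\ Rabs (u p - l) < / INR (S j)).
  { intros N j. assert (Hpos : 0 < / INR (S j)) by (apply Rinv_0_lt_compat, lt_0_INR; lia).
    destruct (Hl (fun r => Rabs (r - l) < / INR (S j)) N) as [p Hp];
      [exists (mkposreal _ Hpos); intros r Hr; exact Hr | exists p; exact Hp]. }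
  set (sel := fun N j => proj1_sig (constructive_indefinite_description _ (Hc N j))).
  assert (Hsel : forall N j, (N <= sel N j)%nat /\ Rabs (u (sel N j) - l) < / INR (S j))
    by (intros; unfold sel; destruct (constructive_indefinite_description _ (Hc N j)); auto).
  set (psi := fix psi j := match j with O => sel O O | S j' => sel (S (psi j')) (S j') end).
  exists psi, l. split.
  - intros j. simpl. destruct (Hsel (S (psi j)) (S j)). lia.
  - intros eps He. destruct (inv_INR_S_lt eps He) as [N HN]. exists N. intros j Hj.
    unfold Rdist. apply Rle_lt_trans with (/ INR (S j)); [|apply HN; lia].
    destruct j as [|j]; [destruct (Hsel O O) as [_ Hh] | destruct (Hsel (S (psi j)) (S j)) as [_ Hh]];
      left; exact Hh.
Qed.

Lemma bounded_coord_cv_subseq m B (xs : nat -> pt) :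
  (forall j k, (k < m)%nat -> Rabs (xs j k) <= B) ->
  exists psi L, incr psi /\ forall k, (k < m)%nat -> Un_cv (fun j => xs (psi j) k) (L k).
Proof.
  induction m as [|m IH]; intros Hb.
  - exists (fun j => j), (fun _ => 0). split; [intros j; lia | intros; lia].
  - destruct IH as [phi [L [Hphi Hc]]]; [intros; apply Hb; lia|].
    destruct (bounded_cv_subseq (fun j => xs (phi j) m) B) as [psi [l [Hpsi Hl]]];
      [intros; apply Hb; lia|].
    exists (fun j => phi (psi j)), (fun k => if Nat.eq_dec k m then l else L k). split.
    + apply incr_comp; assumption.
    + intros k Hk. destruct (Nat.eq_dec k m) as [->|Hne]; [exact Hl|].
      apply (Un_cv_subseq (fun j => xs (phi j) k)); [apply Hc; lia | exact Hpsi].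
Qed.

Definition cv_pt (n : nat) (xs : nat -> pt) (L : pt) : Prop :=
  forall e, 0 < e -> exists J, forall j, (J <= j)%nat -> dist n (xs j) L < e.

Lemma Un_cv_coord_unif n (xs : nat -> pt) L :
  (forall k, (k < n)%nat -> Un_cv (fun j => xs j k) (L k)) -> forall e, 0 < e ->
  exists J, forall j, (J <= j)%nat -> forall k, (k < n)%nat -> Rabs (xs j k - L k) < e.
Proof.
  intros H e He.
  enough (Hm : forall m, (m <= n)%nat -> exists J, forall j, (J <= j)%nat ->
                 forall k, (k < m)%nat -> Rabs (xs j k - L k) < e) by (apply Hm; lia).
  induction m as [|m IH]; intros Hm; [exists O; intros; lia|].
  destruct IH as [J1 H1]; [lia|]. destruct (H m ltac:(lia) e He) as [J2 H2].
  exists (max J1 J2). intros j Hj k Hk.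
  destruct (Nat.eq_dec k m) as [->|Hne]; [apply H2 | apply H1]; lia.
Qed.

Lemma cv_pt_coord n (xs : nat -> pt) L :
  (forall k, (k < n)%nat -> Un_cv (fun j => xs j k) (L k)) -> cv_pt n xs L.
Proof.
  intros H e He. set (r := sqrt (INR n)). assert (Hr : 0 <= r) by apply sqrt_pos.
  set (e' := e / (r + 1)). assert (He' : 0 < e') by (apply Rdiv_lt_0_compat; lra).
  destruct (Un_cv_coord_unif n xs L H e' He') as [J HJ].
  exists J. intros j Hj. specialize (HJ j Hj).
  assert (dist n (xs j) L <= r * e').
  { unfold r. rewrite <- (sqrt_square e') by lra. rewrite <- sqrt_mult by (try apply pos_INR; nra).
    apply sqrt_le_1_alt. rewrite <- sumR_const. apply sumR_le. intros k Hk.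
    specialize (HJ k Hk). apply Rabs_def2 in HJ. simpl. nra. }
  assert (r * e' < e).
  { unfold e'. apply Rmult_lt_reg_r with (r + 1); [lra|].
    replace (r * (e / (r + 1)) * (r + 1)) with (r * e) by (field; lra). nra. }
  lra.
Qed.

Definition seq_compact (n : nat) (K : pt -> Prop) : Prop :=
  forall xs, (forall j, K (xs j)) ->
  exists psi L, incr psi /\ K L /\ cv_pt n (fun j => xs (psi j)) L.

Definition closed_ball (n : nat) (y : pt) (c : R) (x : pt) : Prop := inRn n x /\ sqdist n x y <= c.

Lemma closed_ball_seq_compact n y c : seq_compact n (closed_ball n y c).
Proof.
  intros xs Hx.
  set (B := sumR n (fun k => Rabs (y k)) + sqrt c).
  destruct (bounded_coord_cv_subseq n B xs) as [psi [L [Hpsi HL]]].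
  { intros j k Hk. destruct (Hx j) as [_ Hq].
    pose proof (Rabs_coord_le_dist n (xs j) y k Hk).
    assert (dist n (xs j) y <= sqrt c) by (apply sqrt_le_1_alt; exact Hq).
    pose proof (sumR_ge_term n (fun k => Rabs (y k)) k (fun k _ => Rabs_pos _) Hk).
    pose proof (Rabs_triang (xs j k - y k) (y k)).
    replace (xs j k - y k + y k) with (xs j k) in * by ring.
    unfold B. lra. }
  (* the limit is truncated to make it a point of R^n *)
  set (L' := fun k => if Compare_dec.lt_dec k n then L k else 0).
  assert (Hcv : cv_pt n (fun j => xs (psi j)) L').
  { apply cv_pt_coord. intros k Hk. unfold L'. destruct (Compare_dec.lt_dec k n); [auto | lia]. }
  exists psi, L'. split; [exact Hpsi|]. split; [split|exact Hcv].
  - intros k Hk. unfold L'. destruct (Compare_dec.lt_dec k n); [lia | reflexivity].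
  - apply Rnot_lt_le. intros Hlt.
    destruct (has_grad_at_cont n _ _ L' (has_grad_at_sqdist n y L') (sqdist n L' y - c))
      as [d [Hd0 Hd1]]; [lra|].
    destruct (Hcv d Hd0) as [J HJ].
    specialize (Hd1 (xs (psi J)) (proj1 (Hx _)) (HJ J ltac:(lia))).
    destruct (Hx (psi J)) as [_ Hq]. apply Rabs_def2 in Hd1. lra.
Qed.

Definition lsc_rel (n : nat) (K : pt -> Prop) (F : pt -> R) : Prop :=
  forall x, K x -> forall e, 0 < e ->
    exists d, 0 < d /\ forall z, K z -> dist n z x < d -> F x - e < F z.

Lemma seq_compact_lsc_min n (K : pt -> Prop) (F : pt -> R) :
  seq_compact n K -> lsc_rel n K F -> (exists x, K x) -> (exists B, forall x, K x -> B <= F x) ->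
  exists p, K p /\ forall x, K x -> F p <= F x.
Proof.
  intros Hcomp Hlsc [x0 Hx0] [B HB].
  set (E := fun r => exists x, K x /\ r = - F x).
  destruct (completeness E) as [lam [Hub Hlub]].
  { exists (- B). intros r [x [Kx ->]]. specialize (HB x Kx). lra. }
  { exists (- F x0), x0. auto. }
  set (mu := - lam).
  assert (Hmu : forall x, K x -> mu <= F x).
  { intros x Kx. assert (E (- F x)) by (exists x; auto). specialize (Hub _ H). unfold mu; lra. }
  assert (Hex : forall j, exists x, K x /\ F x < mu + / INR (S j)).
  { intros j. assert (Hpos : 0 < / INR (S j)) by (apply Rinv_0_lt_compat, lt_0_INR; lia).
    apply NNPP. intros Hn.
    assert (Hb : is_upper_bound E (lam - / INR (S j))).
    { intros r [x [Kx ->]]. apply Rnot_lt_le. intros Hlt. apply Hn. exists x. split; [exact Kx|].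
      unfold mu. lra. }
    specialize (Hlub _ Hb). lra. }
  set (xs := fun j => proj1_sig (constructive_indefinite_description _ (Hex j))).
  assert (Hxs : forall j, K (xs j) /\ F (xs j) < mu + / INR (S j))
    by (intros; unfold xs; destruct (constructive_indefinite_description _ (Hex j)); auto).
  destruct (Hcomp xs (fun j => proj1 (Hxs j))) as [psi [L [Hpsi [KL HL]]]].
  exists L. split; [exact KL|]. intros x Kx. specialize (Hmu x Kx).
  apply Rle_trans with mu; [|exact Hmu]. apply Rnot_lt_le. intros Hlt.
  set (e := (F L - mu) / 2). assert (He : 0 < e) by (unfold e; lra).
  destruct (Hlsc L KL e He) as [d [Hd Hd2]].
  destruct (HL d Hd) as [J1 HJ1].
  destruct (inv_INR_S_lt e He) as [J2 HJ2].
  set (j := max J1 J2).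
  specialize (Hd2 (xs (psi j)) (proj1 (Hxs _)) (HJ1 j ltac:(lia))).
  destruct (Hxs (psi j)) as [_ Hf].
  assert (/ INR (S (psi j)) < e) by (apply HJ2; pose proof (incr_ge psi Hpsi j); lia).
  unfold e in *. lra.
Qed.

(** * Viscosity supersolutions *)

Lemma connected_clopen n U (A : pt -> Prop) :
  connected n U -> open_in n U (fun x => U x /\ A x) -> open_in n U (fun x => U x /\ ~ A x) ->
  (exists a, U a /\ A a) -> forall x, U x -> A x.
Proof.
  intros Hconn HA HB Ha x Ux. apply NNPP. intros HnA. apply Hconn.
  exists (fun x => U x /\ A x), (fun x => U x /\ ~ A x).
  split; [exact HA|]. split; [exact HB|]. split; [|split; [|split; [exact Ha|]]].
  - intros z [[_ Az] [_ HnAz]]. exact (HnAz Az).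
  - intros z Uz. destruct (classic (A z)); [left | right]; tauto.
  - exists x. tauto.
Qed.

Lemma lsc_on_Rmin n O u1 u2 :
  lsc_on n O u1 -> lsc_on n O u2 -> lsc_on n O (fun x => Rmin (u1 x) (u2 x)).
Proof.
  intros H1 H2 x Ox e He.
  destruct (H1 x Ox e He) as [d1 [Hd1 H1']]. destruct (H2 x Ox e He) as [d2 [Hd2 H2']].
  exists (Rmin d1 d2). split; [apply Rmin_pos; assumption|]. intros z Oz Hz.
  pose proof (Rmin_l d1 d2). pose proof (Rmin_r d1 d2).
  specialize (H1' z Oz ltac:(lra)). specialize (H2' z Oz ltac:(lra)).
  unfold Rmin. destruct (Rle_dec (u1 x) (u2 x)), (Rle_dec (u1 z) (u2 z)); lra.
Qed.

Lemma lsc_rel_sub_differentiable n U K f g :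
  (forall x, K x -> U x) -> (forall x, K x -> inRn n x) ->
  lsc_on n U f -> differentiable n g -> lsc_rel n K (fun x => f x - g x).
Proof.
  intros HKU HKpt Hf Hg x Kx e He.
  destruct (Hf x (HKU x Kx) (e / 2) ltac:(lra)) as [d1 [Hd1 H1]].
  destruct (differentiable_cont_on n K g HKpt Hg x Kx (e / 2) ltac:(lra)) as [d2 [Hd2 H2]].
  exists (Rmin d1 d2). split; [apply Rmin_pos; assumption|]. intros z Kz Hz.
  pose proof (Rmin_l d1 d2). pose proof (Rmin_r d1 d2).
  specialize (H1 z (HKU z Kz) ltac:(lra)). specialize (H2 z Kz ltac:(lra)).
  apply Rabs_def2 in H2. lra.
Qed.

Lemma exists_pos_mul_lt K e : 0 < K -> 0 < e -> exists a, 0 < a /\ a * K < e.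
Proof.
  intros HK He. exists (e / (2 * K)). split; [apply Rdiv_lt_0_compat; lra|].
  replace (e / (2 * K) * K) with (e / 2) by (field; lra). lra.
Qed.

Lemma closed_ball_min_local_min n U F y c p :
  (forall x, U x -> inRn n x) -> sqdist n p y < c ->
  (forall x, closed_ball n y c x -> F p <= F x) -> local_min_on n U F p.
Proof.
  intros HU Hp Hmin.
  assert (Hdp : dist n p y < sqrt c)
    by (pose proof (sqdist_nonneg n p y); rewrite dist_sqrt_sqdist;
        apply sqrt_lt_1; [apply sqdist_nonneg | lra | exact Hp]).
  exists (sqrt c - dist n p y). split; [lra|]. intros z Uz Hz. apply Hmin. split; [apply HU, Uz|].
  pose proof (dist_triangle n z p y). pose proof (dist_nonneg n z y).
  pose proof (sqrt_sqrt c ltac:(pose proof (sqdist_nonneg n p y); lra)).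
  rewrite sqdist_dist. nra.
Qed.

Section Supersolution.
Variables (n : nat) (U : pt -> Prop) (u1 u2 : pt -> R).
Hypothesis Hsuper : visc_supersolution n U u1 u2.

Let w (x : pt) : R := Rmin (u1 x) (u2 x).

Lemma zero_C2 : C2_on n U (fun _ => 0) (fun _ _ => 0) (fun _ _ _ => 0).
Proof.
  split; [|split].
  - intros x _. apply has_grad_at_const.
  - intros k _ x _. apply has_grad_at_const.
  - intros k l _ _ x _ eps He. exists 1. split; [lra|]. intros. rewrite Rminus_0_r, Rabs_R0. exact He.
Qed.

Lemma super_component_at_min ui uj m x : (1 <= n)%nat -> super_component n U ui uj ->
  (forall z, U z -> m <= ui z) -> U x -> ui x = m -> uj x <= m.
Proof.
  intros Hn Hs Hmin Ux Hx.
  assert (Hq : forall v, quad n (fun _ _ => 0) v = 0).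
  { intros v. unfold quad. rewrite (sumR_ext n _ (fun _ => 0)); [apply sumR_0|].
    intros k _. rewrite (sumR_ext n _ (fun _ => 0)); [apply sumR_0 | intros; ring]. }
  assert (Hlap : inf_lap_minus n (fun _ => 0) (fun _ _ => 0) 0).
  { right. split; [apply dot_0_l|]. split.
    - exists (kdelta 0). split; [split|].
      + intros k Hk. unfold kdelta. destruct (Nat.eq_dec 0 k); [lia | reflexivity].
      + rewrite dot_kdelta_l by lia. unfold kdelta. destruct (Nat.eq_dec 0 0); [reflexivity | lia].
      + apply Hq.
    - intros v _. rewrite Hq. lra. }
  assert (Hlm : local_min_on n U (fun z => ui z - 0) x).
  { exists 1. split; [lra|]. intros z Uz _. rewrite Hx. specialize (Hmin z Uz). lra. }
  pose proof (Hs _ _ _ zero_C2 x Ux Hlm 0 Hlap). lra.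
Qed.

Lemma Rmin_super_at_min m x : (1 <= n)%nat ->
  (forall z, U z -> m <= w z) -> U x -> w x = m -> u1 x = m /\ u2 x = m.
Proof.
  intros Hn Hm Ux Hx. destruct Hsuper as [_ [_ [S12 S21]]].
  assert (H1 : forall z, U z -> m <= u1 z)
    by (intros z Uz; pose proof (Hm z Uz); pose proof (Rmin_l (u1 z) (u2 z)); unfold w in *; lra).
  assert (H2 : forall z, U z -> m <= u2 z)
    by (intros z Uz; pose proof (Hm z Uz); pose proof (Rmin_r (u1 z) (u2 z)); unfold w in *; lra).
  pose proof (H1 x Ux). pose proof (H2 x Ux).
  unfold w, Rmin in Hx. destruct (Rle_dec (u1 x) (u2 x)).
  - pose proof (super_component_at_min u1 u2 m x Hn S12 H1 Ux Hx). lra.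
  - pose proof (super_component_at_min u2 u1 m x Hn S21 H2 Ux Hx). lra.
Qed.

(* [w] is a viscosity supersolution of [- Delta_infty w >= 0]: at a point touched from below,
   the smaller component [ui] has [ui - uj <= 0]. *)
Lemma Rmin_super_inf_lap phi Dphi D2phi p m :
  C2_on n U phi Dphi D2phi -> U p -> local_min_on n U (fun z => w z - phi z) p ->
  inf_lap_minus n (Dphi p) (D2phi p) m -> m <= 0.
Proof.
  intros Hphi Up [r [Hr Hloc]] Hlap. destruct Hsuper as [_ [_ [S12 S21]]].
  destruct (Rle_dec (u1 p) (u2 p)) as [H12|H21].
  - assert (Hlm : local_min_on n U (fun z => u1 z - phi z) p).
    { exists r. split; [exact Hr|]. intros z Uz Hz. specialize (Hloc z Uz Hz).
      pose proof (Rmin_l (u1 z) (u2 z)). unfold w in Hloc.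
      rewrite Rmin_left in Hloc by exact H12. lra. }
    pose proof (S12 _ _ _ Hphi p Up Hlm m Hlap). lra.
  - assert (Hlm : local_min_on n U (fun z => u2 z - phi z) p).
    { exists r. split; [exact Hr|]. intros z Uz Hz. specialize (Hloc z Uz Hz).
      pose proof (Rmin_r (u1 z) (u2 z)). unfold w in Hloc.
      rewrite Rmin_right in Hloc by lra. lra. }
    pose proof (S21 _ _ _ Hphi p Up Hlm m Hlap). lra.
Qed.

Hypothesis HUpt : forall x, U x -> inRn n x.

(* [M] is taken so large that [bump] is strictly infinity-subharmonic outside the ball of
   radius [r1], where the touching point must lie. *)
Lemma Rmin_ne_min_near_strict_ball m y c r1 del x0 :
  (forall z, U z -> m <= w z) -> (forall x, closed_ball n y c x -> U x) ->
  0 < r1 -> 0 < del -> (forall z, U z -> dist n z y < r1 -> m + del < w z) ->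
  U x0 -> sqdist n x0 y < c -> w x0 <> m.
Proof.
  intros Hm HKU Hr1 Hdel Hstrict Ux0 Hx0 Hwx0.
  assert (Hc : 0 < c) by (pose proof (sqdist_nonneg n x0 y); lra).
  destruct (INR_archimed (r1 * r1) c ltac:(nra)) as [M HM].
  destruct (exists_pos_mul_lt (c ^ S (S M)) (del / 2)) as [a [Ha Hac]];
    [apply pow_lt, Hc | lra|].
  set (K := closed_ball n y c). set (F := fun x => w x - bump n y a c M x).
  destruct (seq_compact_lsc_min n K F) as [p [Kp Hpmin]].
  - apply closed_ball_seq_compact.
  - apply (lsc_rel_sub_differentiable n U); [exact HKU | intros x Kx; apply Kx | |].
    + destruct Hsuper as [Hl1 [Hl2 _]]. apply lsc_on_Rmin; assumption.
    + apply (differentiable_comp n (powc a c _)); [apply derivable_powc | apply differentiable_sqdist].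
  - exists x0. split; [apply HUpt, Ux0 | lra].
  - exists (m - del / 2). intros x Kx. pose proof (Hm x (HKU x Kx)).
    pose proof (bump_bounds n y a c M x ltac:(lra) (proj2 Kx)). unfold F. lra.
  - assert (HFx0 : F x0 < m)
      by (pose proof (bump_pos n y a c M x0 Ha Hx0); unfold F; lra).
    assert (HFp : F p < m) by (pose proof (Hpmin x0 (conj (HUpt x0 Ux0) (Rlt_le _ _ Hx0))); lra).
    assert (Up : U p) by (apply HKU, Kp).
    pose proof (Hm p Up).
    assert (Hin : sqdist n p y < c).
    { destruct (proj2 Kp) as [Hlt|Heq]; [exact Hlt|].
      pose proof (bump_sphere n y a c M p Heq). unfold F in HFp. lra. }
    assert (Hfar : r1 * r1 <= sqdist n p y).
    { apply Rnot_lt_le. intros Hlt.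
      assert (Hd : dist n p y < r1)
        by (rewrite dist_sqrt_sqdist, <- (sqrt_square r1) by lra;
            apply sqrt_lt_1; [apply sqdist_nonneg | nra | exact Hlt]).
      pose proof (Hstrict p Up Hd). pose proof (bump_bounds n y a c M p ltac:(lra) (proj2 Kp)).
      unfold F in HFp. lra. }
    destruct (bump_inf_lap_pos n y a c M p Ha ltac:(nra) ltac:(pose proof (pos_INR M); nra))
      as [lap [Hlap Hinf]].
    pose proof (Rmin_super_inf_lap _ _ _ p lap (bump_C2 n y a c M U HUpt) Up
                  (closed_ball_min_local_min n U F y c p HUpt Hin Hpmin) Hinf).
    lra.
Qed.

Lemma Rmin_min_set_open m x0 : is_open n U ->
  (forall z, U z -> m <= w z) -> U x0 -> w x0 = m ->
  exists r, 0 < r /\ forall y, U y -> dist n y x0 < r -> w y = m.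
Proof.
  intros [_ HUo] Hm Ux0 Hx0.
  destruct (HUo x0 Ux0) as [r0 [Hr0 Hball]].
  set (rho := r0 / 4). exists rho. split; [unfold rho; lra|].
  intros y Uy Hy. apply NNPP. intros Hne.
  assert (Hwy : m < w y) by (pose proof (Hm y Uy); lra).
  set (del := (w y - m) / 2).
  destruct Hsuper as [Hl1 [Hl2 _]].
  destruct (lsc_on_Rmin n U u1 u2 Hl1 Hl2 y Uy del ltac:(unfold del; lra)) as [r1 [Hr1 Hnear]].
  apply (Rmin_ne_min_near_strict_ball m y (2 * rho * (2 * rho)) r1 del x0 Hm); try assumption.
  - intros x [Hx Hxy]. apply Hball; [exact Hx|].
    assert (dist n x y <= 2 * rho)
      by (rewrite dist_sqrt_sqdist, <- (sqrt_square (2 * rho)) by (unfold rho; lra);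
          apply sqrt_le_1_alt, Hxy).
    pose proof (dist_triangle n x y x0). unfold rho in *. lra.
  - unfold del; lra.
  - intros z Uz Hz. specialize (Hnear z Uz Hz). unfold del, w in *. lra.
  - rewrite sqdist_dist, dist_sym. pose proof (dist_nonneg n y x0). unfold rho in *. nra.
Qed.

End Supersolution.

Lemma lsc_above_open_in n U f m :
  lsc_on n U f -> (forall x, U x -> m <= f x) -> open_in n U (fun x => U x /\ f x <> m).
Proof.
  intros Hf Hm. split; [intros x [Ux _]; exact Ux|]. intros x [Ux Hx].
  assert (Hlt : m < f x) by (pose proof (Hm x Ux); lra).
  destruct (Hf x Ux (f x - m) ltac:(lra)) as [d [Hd Hnear]].
  exists d. split; [exact Hd|]. intros z Uz Hz. specialize (Hnear z Uz Hz). split; [exact Uz | lra].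
Qed.

Theorem mainTheorem2 (n : nat) (U : pt -> Prop) (u1 u2 : pt -> R) :
  (1 <= n)%nat ->
  is_open n U -> bounded_set n U -> connected n U ->
  visc_supersolution n U u1 u2 ->
  (exists xs, U xs /\
     ((forall x, U x -> u1 xs <= u1 x /\ u1 xs <= u2 x) \/
      (forall x, U x -> u2 xs <= u1 x /\ u2 xs <= u2 x))) ->
  exists C, forall x, U x -> u1 x = C /\ u2 x = C.
Proof.
  intros Hn HUo _ Hconn Hsuper [xs [Uxs Hxs]].
  set (m := Rmin (u1 xs) (u2 xs)).
  assert (Hm : forall x, U x -> m <= Rmin (u1 x) (u2 x)).
  { intros x Ux. unfold m. apply Rmin_glb;
      destruct Hxs as [H|H]; destruct (H x Ux); destruct (H xs Uxs);
      unfold Rmin; destruct (Rle_dec (u1 xs) (u2 xs)); lra. }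
  assert (Hall : forall x, U x -> Rmin (u1 x) (u2 x) = m).
  { apply (connected_clopen n U _ Hconn).
    - split; [intros x [Ux _]; exact Ux|]. intros x [Ux Hx].
      destruct (Rmin_min_set_open n U u1 u2 Hsuper (proj1 HUo) m x HUo Hm Ux Hx)
        as [r [Hr Hnear]].
      exists r. split; [exact Hr|]. intros z Uz Hz. split; [exact Uz | apply Hnear; assumption].
    - destruct Hsuper as [Hl1 [Hl2 _]].
      exact (lsc_above_open_in n U _ m (lsc_on_Rmin n U u1 u2 Hl1 Hl2) Hm).
    - exists xs. split; [exact Uxs | reflexivity]. }
  exists m. intros x Ux.
  exact (Rmin_super_at_min n U u1 u2 Hsuper m x Hn Hm Ux (Hall x Ux)).
Qed.
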